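(* The function $H:\mathbb{R}\to\mathbb{R}$, $H(x)=\psi'(x)\big(c-\tilde{R}(x,\bar{y})\big)+(\rho+\kappa)^{-1}\psi(x)$, has exactly one zero $\tilde{x}\in\mathbb{R}$.
   Context: Fix constants $\mu\in\mathbb{R}$, $\kappa>0$, $\sigma>0$, $\rho>0$, $\beta>0$, $c\geq0$, $\bar{y}>0$. Let $D_\alpha(x)=\frac{e^{-x^2/4}}{\Gamma(-\alpha)}\int_0^\infty t^{-\alpha-1}e^{-t^2/2-xt}dt$ ($\alpha<0$) be the parabolic cylinder function, and $\psi(x)=e^{\frac{\kappa(x-\mu)^2}{2\sigma^2}}D_{-\rho/\kappa}\big(-\frac{x-\mu}{\sigma}\sqrt{2\kappa}\big)$; $\psi$ is the strictly increasing positive solution of $\frac{\sigma^2}{2}u''+\kappa(\mu-x)u'-\rho u=0$. Let $\tilde{R}(x,y)=\frac{\mu\kappa+\rho x-\beta(\rho+2\kappa)y}{\rho(\rho+\kappa)}$. *)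

From Stdlib Require Import Reals.
From Coquelicot Require Import Coquelicot.
Open Scope R_scope.

Definition Gamma (s : R) : R :=
  RInt_gen (fun t => Rpower t (s - 1) * exp (- t)) (at_right 0) (Rbar_locally p_infty).

(* Parabolic cylinder function, integral representation (alpha < 0):
   D_alpha(x) = e^{-x^2/4}/Gamma(-alpha) * int_0^oo t^{-alpha-1} e^{-t^2/2 - x t} dt *)
Definition Dpc (alpha x : R) : R :=
  exp (- x ^ 2 / 4) / Gamma (- alpha) *
  RInt_gen (fun t => Rpower t (- alpha - 1) * exp (- t ^ 2 / 2 - x * t))
           (at_right 0) (Rbar_locally p_infty).

Definition psi (mu kappa sigma rho : R) (x : R) : R :=
  exp (kappa * (x - mu) ^ 2 / (2 * sigma ^ 2)) *
  Dpc (- rho / kappa) (- ((x - mu) / sigma) * sqrt (2 * kappa)).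

Definition Rtilde (mu kappa rho beta : R) (x y : R) : R :=
  (mu * kappa + rho * x - beta * (rho + 2 * kappa) * y) / (rho * (rho + kappa)).

Definition Hfun (mu kappa sigma rho beta c ybar : R) (x : R) : R :=
  Derive (psi mu kappa sigma rho) x * (c - Rtilde mu kappa rho beta x ybar)
  + / (rho + kappa) * psi mu kappa sigma rho x.

(* Writing [I p x = int_0^oo t^p exp (-t^2/2 - x t) dt], one has
   [psi = I (nu - 1) z / Gamma nu] with [nu = rho/kappa], [z = a (mu - x)],
   [a = sqrt (2 kappa) / sigma], and [d/dx I p x = - I (p + 1) x].  Since
   [c - Rtilde x ybar = (x0 - x) / (rho + kappa)] for an explicit [x0], [H] is a
   positive multiple of [Hr z = I q z + (z - z0) I (q + 1) z] with [q = nu - 1],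
   [z0 = a (mu - x0)].  Now [Hr > 0] on [z >= z0], while [Hr' z = (z0 - z) I (q + 2) z]
   is positive below [z0] and bounded away from 0 below [z0 - 1]; so [Hr] increases
   from [-oo] there and has exactly one zero. *)

From Stdlib Require Import Reals Lra.
From Coquelicot Require Import Coquelicot.
Open Scope R_scope.

Lemma exp_le_compat x y : x <= y -> exp x <= exp y.
Proof.
  intros [Hlt | ->]; [left; exact (exp_increasing _ _ Hlt) | right; reflexivity].
Qed.

Lemma at_right_0_interval a : 0 < a -> at_right 0 (fun u => 0 < u < a).
Proof.
  intros Ha. exists (mkposreal a Ha). intros u Hu Hpos.
  change (Rabs (u - 0) < a) in Hu. apply Rabs_def2 in Hu. lra.
Qed.

Lemma filter_prod_0_p_infty a b : 0 < a ->
  filter_prod (at_right 0) (Rbar_locally p_infty) (fun uv => 0 < fst uv < a /\ b < snd uv).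
Proof.
  intros Ha. apply Filter_prod with (fun u => 0 < u < a) (fun v => b < v).
  - now apply at_right_0_interval.
  - now exists b.
  - intros u v Hu Hv. now split.
Qed.

Lemma ex_RInt_inside (f : R -> R) lo hi a b :
  (forall x, lo <= x <= hi -> continuous f x) ->
  lo <= a <= hi -> lo <= b <= hi -> ex_RInt f a b.
Proof.
  intros Hf Ha Hb. apply (ex_RInt_continuous (V := R_CompleteNormedModule)). intros z Hz. apply Hf.
  split.
  - apply Rle_trans with (Rmin a b); [apply Rmin_glb|]; lra.
  - apply Rle_trans with (Rmax a b); [|apply Rmax_lub]; lra.
Qed.

Lemma abs_RInt_le_Rmin_Rmax (f g : R -> R) a b :
  (forall x, Rmin a b <= x <= Rmax a b -> continuous f x /\ continuous g x /\ Rabs (f x) <= g x) ->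
  Rabs (RInt f a b) <= RInt g (Rmin a b) (Rmax a b).
Proof.
  intros Hfg.
  assert (Hle : Rabs (RInt f (Rmin a b) (Rmax a b)) <= RInt g (Rmin a b) (Rmax a b)).
  { assert (Hm : Rmin a b <= Rmax a b) by (apply Rle_trans with a; [apply Rmin_l | apply Rmax_l]).
    eapply Rle_trans; [apply abs_RInt_le; [exact Hm|]|apply RInt_le; [exact Hm| | |]].
    - apply (ex_RInt_inside _ (Rmin a b) (Rmax a b)); [intros; apply Hfg|..]; lra.
    - apply (ex_RInt_inside _ (Rmin a b) (Rmax a b)); [|lra|lra].
      intros x Hx. apply (continuous_comp f Rabs); [apply Hfg, Hx | apply continuous_Rabs].
    - apply (ex_RInt_inside _ (Rmin a b) (Rmax a b)); [intros; apply Hfg|..]; lra.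
    - intros x Hx. apply Hfg. lra. }
  destruct (Rle_dec a b) as [Hab | Hab].
  - now rewrite Rmin_left, Rmax_right in * by lra.
  - rewrite Rmin_right, Rmax_left in * by lra.
    rewrite <- opp_RInt_swap.
    + change (Rabs (- RInt f b a) <= RInt g b a). now rewrite Rabs_Ropp.
    + apply (ex_RInt_inside _ b a); [intros; apply Hfg|..]; lra.
Qed.

Lemma RInt_Chasles_inside (f : R -> R) lo hi a b c :
  (forall x, lo <= x <= hi -> continuous f x) ->
  lo <= a <= hi -> lo <= b <= hi -> lo <= c <= hi ->
  RInt f a b + RInt f b c = RInt f a c.
Proof.
  intros Hf Ha Hb Hc.
  exact (RInt_Chasles (V := R_CompleteNormedModule) f a b c
    (ex_RInt_inside f lo hi a b Hf Ha Hb) (ex_RInt_inside f lo hi b c Hf Hb Hc)).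
Qed.

(* The difference is [int_a^a' f + int_b'^b f], and these two pieces lie in the
   gaps between [[Rmax a a', Rmin b b']] and [[Rmin a a', Rmax b b']]. *)
Lemma abs_RInt_sub_le (f g : R -> R) a b a' b' :
  Rmax a a' <= Rmin b b' ->
  (forall x, Rmin a a' <= x <= Rmax b b' ->
     continuous f x /\ continuous g x /\ Rabs (f x) <= g x) ->
  Rabs (RInt f a b - RInt f a' b')
    <= RInt g (Rmin a a') (Rmax b b') - RInt g (Rmax a a') (Rmin b b').
Proof.
  intros Hmid Hfg.
  set (lo := Rmin a a'). set (hi := Rmax b b').
  assert (Hlo : lo <= a /\ lo <= a') by (split; [apply Rmin_l | apply Rmin_r]).
  assert (Hhi : b <= hi /\ b' <= hi) by (split; [apply Rmax_l | apply Rmax_r]).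
  assert (Hm1 : a <= Rmax a a' /\ a' <= Rmax a a') by (split; [apply Rmax_l | apply Rmax_r]).
  assert (Hm2 : Rmin b b' <= b /\ Rmin b b' <= b') by (split; [apply Rmin_l | apply Rmin_r]).
  assert (Hf : forall x, lo <= x <= hi -> continuous f x) by (intros; apply Hfg; auto).
  assert (Hg : forall x, lo <= x <= hi -> continuous g x) by (intros; apply Hfg; auto).
  rewrite <- (RInt_Chasles_inside f lo hi a a' b), <- (RInt_Chasles_inside f lo hi a' b' b)
    by (auto; lra).
  rewrite <- (RInt_Chasles_inside g lo hi lo (Rmax a a') hi),
    <- (RInt_Chasles_inside g lo hi (Rmax a a') (Rmin b b') hi) by (auto; lra).
  assert (Hleft := abs_RInt_le_Rmin_Rmax f g a a').
  assert (Hright := abs_RInt_le_Rmin_Rmax f g b' b).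
  rewrite (Rmin_comm b' b), (Rmax_comm b' b) in Hright.
  fold lo in Hleft.
  assert (Hsplit := Rabs_triang (RInt f a a') (RInt f b' b)).
  replace (RInt f a a' + (RInt f a' b' + RInt f b' b) - RInt f a' b')
    with (RInt f a a' + RInt f b' b) by ring.
  enough (Rabs (RInt f a a') <= RInt g lo (Rmax a a') /\
          Rabs (RInt f b' b) <= RInt g (Rmin b b') hi) by lra.
  split; [apply Hleft | apply Hright]; intros x Hx; apply Hfg; unfold lo, hi in *; lra.
Qed.

Lemma ex_RInt_gen_dominated {Fa Fb : (R -> Prop) -> Prop}
  {FFa : ProperFilter Fa} {FFb : ProperFilter Fb} (f g : R -> R) (lg : R) :
  filter_prod Fa Fb (fun ab => fst ab <= snd ab /\ forall x, fst ab <= x <= snd ab ->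
    continuous f x /\ continuous g x /\ Rabs (f x) <= g x) ->
  is_RInt_gen g Fa Fb lg -> ex_RInt_gen f Fa Fb.
Proof.
  (* Cauchy criterion: for two windows [(a, b)], [(a', b')] taken in a product
     set, the hull [(Rmin a a', Rmax b b')] and the core [(Rmax a a', Rmin b b')]
     are in the same set, so their [g]-integrals are both close to [lg]. *)
  intros Hdom Hg.
  apply (@filterlimi_locally_cauchy _ R_CompleteSpace _ (@filter_prod_proper _ _ _ _ FFa FFb)).
  - eapply filter_imp; [|exact Hdom]. intros [a b] [Hab Hfg]; simpl in *. split.
    + exists (RInt f a b). apply (RInt_correct (V := R_CompleteNormedModule)).
      apply (ex_RInt_inside f a b); [intros; apply Hfg|..]; auto with real.
    + intros u v Hu Hv.
      apply (is_RInt_unique (V := R_CompleteNormedModule)) in Hu, Hv. congruence.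
  - intros eps.
    assert (Hnear := Hg (ball lg (pos_div_2 eps)) (locally_ball _ _)).
    destruct (filter_and _ _ Hdom Hnear) as [Q Q' HQ HQ' HP].
    exists (fun ab => Q (fst ab) /\ Q' (snd ab)). split.
    + exact (Filter_prod _ _ _ Q Q' HQ HQ' (fun a b Ha Hb => conj Ha Hb)).
    + intros [a b] [a' b'] [Ha Hb] [Ha' Hb'] u v Hu Hv; simpl in *.
      destruct (HP (Rmin a a') (Rmax b b')) as [[_ Hfg] [y1 [Hy1 Hball1]]];
        [apply Rmin_case | apply Rmax_case|]; auto.
      destruct (HP (Rmax a a') (Rmin b b')) as [[Hmid _] [y2 [Hy2 Hball2]]];
        [apply Rmax_case | apply Rmin_case|]; auto.
      simpl in *.
      apply (is_RInt_unique (V := R_CompleteNormedModule)) in Hu, Hv, Hy1, Hy2.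
      subst u v y1 y2.
      change (Rabs (RInt f a' b' - RInt f a b) < eps).
      rewrite Rabs_minus_sym.
      eapply Rle_lt_trans; [apply abs_RInt_sub_le; auto|].
      change (Rabs (RInt g (Rmin a a') (Rmax b b') - lg) < eps / 2) in Hball1.
      change (Rabs (RInt g (Rmax a a') (Rmin b b') - lg) < eps / 2) in Hball2.
      apply Rabs_def2 in Hball1, Hball2. lra.
Qed.

Lemma is_derive_Rpower r t : 0 < t -> is_derive (fun x => Rpower x r) t (r * Rpower t (r - 1)).
Proof. intros Ht. apply is_derive_Reals. now apply derivable_pt_lim_power. Qed.

Lemma continuous_Rpower r t : 0 < t -> continuous (fun x => Rpower x r) t.
Proof.
  intros Ht. apply (ex_derive_continuous (V := R_NormedModule)).
  eexists. now apply is_derive_Rpower.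
Qed.

Lemma filterlim_Rpower_0 (F : (R -> Prop) -> Prop) r :
  filterlim (fun t => r * ln t) F (Rbar_locally m_infty) ->
  filterlim (fun t => Rpower t r) F (locally 0).
Proof. intros H. exact (filterlim_comp _ _ _ _ exp _ _ _ H is_lim_exp_m). Qed.

Lemma is_RInt_gen_Rpower {Fa Fb : (R -> Prop) -> Prop} {FFa : Filter Fa} {FFb : Filter Fb}
  p la lb : p + 1 <> 0 ->
  filter_prod Fa Fb (fun ab => 0 < fst ab /\ 0 < snd ab) ->
  filterlim (fun t => Rpower t (p + 1)) Fa (locally la) ->
  filterlim (fun t => Rpower t (p + 1)) Fb (locally lb) ->
  is_RInt_gen (fun t => Rpower t p) Fa Fb ((lb - la) / (p + 1)).
Proof.
  intros Hp Hpos Ha Hb.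
  set (F := fun t => Rpower t (p + 1)).
  assert (HF : forall t, 0 < t -> is_derive F t ((p + 1) * Rpower t p)).
  { intros t Ht. replace p with (p + 1 - 1) at 2 by ring. now apply is_derive_Rpower. }
  assert (Hmid : filter_prod Fa Fb (fun ab => forall x,
     Rmin (fst ab) (snd ab) <= x <= Rmax (fst ab) (snd ab) -> 0 < x)).
  { eapply filter_imp; [|exact Hpos]. intros [a b] [Ha0 Hb0] x Hx; simpl in *.
    apply Rlt_le_trans with (Rmin a b); [apply Rmin_case|]; lra. }
  assert (Hint := is_RInt_gen_Derive (FFa := FFa) (FFb := FFb) F la lb
    (filter_imp _ _ (fun ab H x Hx => ex_intro _ _ (HF x (H x Hx))) Hmid)).
  apply (is_RInt_gen_scal _ (/ (p + 1))) in Hint.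
  - unfold Rdiv. rewrite Rmult_comm.
    eapply is_RInt_gen_ext; [|exact Hint].
    eapply filter_imp; [|exact Hmid]. intros ab H x Hx.
    assert (Hx0 : 0 < x) by (apply H; lra).
    rewrite (is_derive_unique _ _ _ (HF x Hx0)).
    change (/ (p + 1) * ((p + 1) * Rpower x p) = Rpower x p). field. exact Hp.
  - eapply filter_imp; [|exact Hmid]. intros ab H x Hx.
    apply (continuous_ext_loc _ (fun y => (p + 1) * Rpower y p)).
    + assert (Hx0 := H x Hx). exists (mkposreal x Hx0). intros y Hy.
      change (Rabs (y - x) < x) in Hy. apply Rabs_def2 in Hy.
      symmetry. apply is_derive_unique, HF. lra.
    + apply (continuous_scal_r (p + 1) (fun y => Rpower y p)), continuous_Rpower, H, Hx.
  - exact Ha.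
  - exact Hb.
Qed.

Lemma filterlim_Rpower_at_point_1 r : filterlim (fun t => Rpower t r) (at_point 1) (locally 1).
Proof.
  intros P HP. unfold filtermap, at_point, Rpower.
  rewrite ln_1, Rmult_0_r, exp_0. exact (locally_singleton _ _ HP).
Qed.

Lemma is_RInt_gen_Rpower_0_1 p : -1 < p ->
  is_RInt_gen (fun t => Rpower t p) (at_right 0) (at_point 1) (/ (p + 1)).
Proof.
  intros Hp. replace (/ (p + 1)) with ((1 - 0) / (p + 1)) by (field; lra).
  apply is_RInt_gen_Rpower; [lra | | | apply filterlim_Rpower_at_point_1].
  - apply Filter_prod with (fun a => 0 < a < 1) (fun b => b = 1).
    + apply at_right_0_interval; lra.
    + reflexivity.
    + intros a b Ha ->. simpl. lra.
  - apply filterlim_Rpower_0. intros P [M HM].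
    assert (Hln := is_lim_ln_0 (fun y => y < M / (p + 1)) (ex_intro _ _ (fun y H => H))).
    unfold filtermap in *.
    apply (filter_imp (fun t => ln t < M / (p + 1))); [|exact Hln]. intros t Ht. apply HM.
    apply Rmult_lt_reg_l with (/ (p + 1)); [apply Rinv_0_lt_compat; lra|].
    rewrite <- Rmult_assoc, Rinv_l, Rmult_1_l by lra. rewrite Rmult_comm. exact Ht.
Qed.

Lemma is_RInt_gen_Rpower_1_p_infty p : p < -1 ->
  is_RInt_gen (fun t => Rpower t p) (at_point 1) (Rbar_locally p_infty) (- / (p + 1)).
Proof.
  intros Hp. replace (- / (p + 1)) with ((0 - 1) / (p + 1)) by (field; lra).
  apply is_RInt_gen_Rpower; [lra | | apply filterlim_Rpower_at_point_1 |].
  - apply Filter_prod with (fun a => a = 1) (fun b => 0 < b).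
    + reflexivity.
    + now exists 0.
    + intros a b -> Hb. simpl. lra.
  - apply filterlim_Rpower_0. intros P [M HM].
    assert (Hln := is_lim_ln_p (fun y => M / (p + 1) < y) (ex_intro _ _ (fun y H => H))).
    unfold filtermap in *.
    apply (filter_imp (fun t => M / (p + 1) < ln t)); [|exact Hln]. intros t Ht. apply HM.
    apply Rmult_lt_reg_l with (- / (p + 1)); [apply Ropp_0_gt_lt_contravar, Rinv_lt_0_compat; lra|].
    replace (- / (p + 1) * ((p + 1) * ln t)) with (- ln t) by (field; lra).
    replace (- / (p + 1) * M) with (- (M / (p + 1))) by (field; lra). lra.
Qed.

Lemma ex_RInt_gen_Rpower_bounds (f : R -> R) p A B : -1 < p ->
  (forall t, 0 < t -> continuous f t) ->
  (forall t, 0 < t <= 1 -> Rabs (f t) <= A * Rpower t p) ->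
  (forall t, 1 <= t -> Rabs (f t) <= B * Rpower t (-2)) ->
  ex_RInt_gen f (at_right 0) (Rbar_locally p_infty).
Proof.
  intros Hp Hf HA HB.
  assert (Hcont : forall C r t, 0 < t -> continuous (fun x => C * Rpower x r) t).
  { intros C r t Ht. apply (continuous_scal_r C (fun x => Rpower x r)), continuous_Rpower, Ht. }
  apply (ex_RInt_gen_Chasles f 1).
  - apply (ex_RInt_gen_dominated f (fun t => A * Rpower t p) (A * / (p + 1))).
    + apply Filter_prod with (fun a => 0 < a < 1) (fun b => b = 1);
        [apply at_right_0_interval; lra | reflexivity |].
      intros a b Ha ->; simpl. split; [lra|].
      intros x Hx. repeat split; [apply Hf | apply Hcont | apply HA]; lra.
    + exact (is_RInt_gen_scal _ A _ (is_RInt_gen_Rpower_0_1 p Hp)).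
  - apply (ex_RInt_gen_dominated f (fun t => B * Rpower t (-2)) (B * - / (-2 + 1))).
    + apply Filter_prod with (fun a => a = 1) (fun b => 1 < b); [reflexivity | now exists 1 |].
      intros a b -> Hb; simpl. split; [lra|].
      intros x Hx. repeat split; [apply Hf | apply Hcont | apply HB]; lra.
    + refine (is_RInt_gen_scal _ B _ (is_RInt_gen_Rpower_1_p_infty (-2) _)). lra.
Qed.

Lemma RInt_le_is_RInt_gen (h : R -> R) l a b : 0 < a <= b ->
  (forall t, 0 < t -> continuous h t /\ 0 <= h t) ->
  is_RInt_gen h (at_right 0) (Rbar_locally p_infty) l -> RInt h a b <= l.
Proof.
  intros Hab Hh Hl. apply Rnot_lt_le. intros Hlt.
  assert (He : 0 < RInt h a b - l) by lra.
  assert (Hnear := Hl (ball l (mkposreal _ He)) (locally_ball _ _)). unfold filtermapi in Hnear.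
  destruct (@filter_ex _ _
      (@filter_prod_proper _ _ _ _ (at_right_proper_filter 0) (Rbar_locally_filter p_infty)) _
      (filter_and _ _ Hnear (filter_prod_0_p_infty a b (proj1 Hab))))
    as [[a' b'] [[y [Hy Hball]] [Ha' Hb']]]; simpl in *.
  apply (is_RInt_unique (V := R_CompleteNormedModule)) in Hy. subst y.
  change (Rabs (RInt h a' b' - l) < RInt h a b - l) in Hball.
  assert (Hc : forall t, a' <= t <= b' -> continuous h t) by (intros t Ht; apply Hh; lra).
  assert (Hpos : forall x y, a' <= x <= y -> y <= b' -> 0 <= RInt h x y).
  { intros x y Hxy Hy. apply RInt_ge_0; [lra | apply (ex_RInt_inside h a' b'); auto; lra |].
    intros t Ht. apply Hh. lra. }
  rewrite <- (RInt_Chasles_inside h a' b' a' a b'), <- (RInt_Chasles_inside h a' b' a b b')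
    in Hball by (auto; lra).
  assert (Hleft : 0 <= RInt h a' a) by (apply Hpos; lra).
  assert (Hright : 0 <= RInt h b b') by (apply Hpos; lra).
  apply Rabs_def2 in Hball. lra.
Qed.

Lemma is_RInt_gen_gt_0 (h : R -> R) l :
  (forall t, 0 < t -> continuous h t /\ 0 < h t) ->
  is_RInt_gen h (at_right 0) (Rbar_locally p_infty) l -> 0 < l.
Proof.
  intros Hh Hl.
  apply Rlt_le_trans with (RInt h 1 2).
  - apply RInt_gt_0; [lra | intros; apply Hh; lra | intros; apply Hh; lra].
  - apply (RInt_le_is_RInt_gen h); [lra | | exact Hl].
    intros t Ht. split; [|apply Rlt_le]; apply Hh, Ht.
Qed.

Lemma mul_ln_le k t : 1 <= t -> k * ln t <= t + k ^ 2.
Proof.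
  intros Ht. set (u := ln t).
  assert (Hu : 0 <= u) by (unfold u; rewrite <- ln_1; apply ln_le; lra).
  assert (Hexp : t = exp (u / 2) * exp (u / 2)).
  { rewrite <- exp_plus. replace (u / 2 + u / 2) with u by field.
    unfold u. now rewrite exp_ln by lra. }
  assert (Hhalf := exp_ineq1_le (u / 2)).
  assert (Hk : k * u <= Rabs k * u) by (apply Rmult_le_compat_r; [exact Hu | apply Rle_abs]).
  assert (Hk2 : Rabs k * Rabs k = k ^ 2) by (rewrite <- Rabs_mult, Rabs_right; [ring | nra]).
  assert (Hsq : (1 + u / 2) ^ 2 <= t) by (rewrite Hexp; nra).
  assert (Hamgm : 0 <= (u / 2 - Rabs k) ^ 2) by apply pow2_ge_0.
  nra.
Qed.

Lemma abs_exp_sub_1_sub_le u : Rabs (exp u - 1 - u) <= u ^ 2 * exp (Rabs u).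
Proof.
  assert (H1 := exp_ineq1_le u).
  assert (H2 := exp_ineq1_le (- u)).
  assert (He : exp (- u) * exp u = 1) by (rewrite <- exp_plus, Rplus_opp_l; apply exp_0).
  assert (Hp : 0 < exp u) by apply exp_pos.
  assert (Hprod : exp u * (1 - u) <= 1) by nra.
  rewrite Rabs_right by lra.
  destruct (Rle_lt_dec 0 u) as [Hu | Hu].
  - rewrite Rabs_right by lra. nra.
  - rewrite Rabs_left by lra. nra.
Qed.

Lemma is_derive_quadratic_remainder (f : R -> R) x l C :
  (forall h, Rabs h <= 1 -> Rabs (f (x + h) - f x - h * l) <= C * h ^ 2) ->
  is_derive f x l.
Proof.
  intros Hrem. apply is_derive_Reals. intros eps Heps.
  set (M := Rabs C + 1).
  assert (HM0 : 0 < M) by (unfold M; pose proof (Rabs_pos C); lra).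
  assert (Hd : 0 < Rmin 1 (eps / M)) by (apply Rmin_pos; [lra | now apply Rdiv_lt_0_compat]).
  exists (mkposreal _ Hd). intros h Hh0 Hh. simpl in Hh.
  assert (Hh1 := Rle_trans _ _ _ (Rlt_le _ _ Hh) (Rmin_l 1 (eps / M))).
  assert (Hh2 := Rlt_le_trans _ _ _ Hh (Rmin_r 1 (eps / M))).
  assert (Hah : 0 < Rabs h) by now apply Rabs_pos_lt.
  replace ((f (x + h) - f x) / h - l) with ((f (x + h) - f x - h * l) / h) by (field; exact Hh0).
  rewrite Rabs_div by exact Hh0.
  apply Rmult_lt_reg_r with (Rabs h); [exact Hah|].
  unfold Rdiv. rewrite Rmult_assoc, Rinv_l, Rmult_1_r by lra.
  eapply Rle_lt_trans; [apply Hrem, Hh1|].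
  assert (Hsq : h ^ 2 = Rabs h * Rabs h) by (rewrite <- Rabs_mult, Rabs_right; [ring | nra]).
  assert (HM : C <= M) by (unfold M; pose proof (Rle_abs C); lra).
  assert (Hlt : Rabs h * M < eps).
  { apply Rmult_lt_reg_r with (/ M); [now apply Rinv_0_lt_compat|].
    rewrite Rmult_assoc, Rinv_r, Rmult_1_r by lra. exact Hh2. }
  rewrite Hsq. nra.
Qed.

Definition pc_integrand (p x t : R) : R := Rpower t p * exp (- t ^ 2 / 2 - x * t).

Definition pc_integral (p x : R) : R :=
  RInt_gen (pc_integrand p x) (at_right 0) (Rbar_locally p_infty).

Lemma Dpc_pc_integral alpha x :
  Dpc alpha x = exp (- x ^ 2 / 4) / Gamma (- alpha) * pc_integral (- alpha - 1) x.
Proof. reflexivity. Qed.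

Lemma pc_integrand_pos p x t : 0 < pc_integrand p x t.
Proof. apply Rmult_lt_0_compat; apply exp_pos. Qed.

Lemma continuous_pc_integrand p x t : 0 < t -> continuous (pc_integrand p x) t.
Proof.
  intros Ht. apply (ex_derive_continuous (V := R_NormedModule)).
  unfold pc_integrand, Rpower. auto_derive. exact Ht.
Qed.

Lemma pc_integrand_shift p x h t : pc_integrand p (x + h) t = pc_integrand p x t * exp (- h * t).
Proof. unfold pc_integrand. rewrite Rmult_assoc, <- exp_plus. f_equal. f_equal. ring. Qed.

Lemma pc_integrand_succ p x t : 0 < t -> pc_integrand (p + 1) x t = pc_integrand p x t * t.
Proof. intros Ht. unfold pc_integrand. rewrite Rpower_plus, Rpower_1 by exact Ht. ring. Qed.

Lemma ex_RInt_gen_pc_integrand p x : -1 < p ->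
  ex_RInt_gen (pc_integrand p x) (at_right 0) (Rbar_locally p_infty).
Proof.
  intros Hp.
  apply (ex_RInt_gen_Rpower_bounds _ p (exp (Rabs x)) (exp ((1 - x) ^ 2 / 2 + (p + 2) ^ 2)));
    [exact Hp | intros; now apply continuous_pc_integrand | |];
    intros t Ht; rewrite Rabs_right by apply Rle_ge, Rlt_le, pc_integrand_pos;
    unfold pc_integrand, Rpower; rewrite <- !exp_plus; apply exp_le_compat.
  - assert (- x * t <= Rabs x * t)
      by (apply Rmult_le_compat_r; [lra | rewrite <- Rabs_Ropp; apply Rle_abs]).
    assert (Rabs x * t <= Rabs x) by (pose proof (Rabs_pos x); nra).
    assert (0 <= t ^ 2) by apply pow2_ge_0.
    lra.
  - assert (Hln := mul_ln_le (p + 2) t Ht).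
    assert (Hsq : 0 <= (t - (1 - x)) ^ 2) by apply pow2_ge_0.
    nra.
Qed.

Lemma is_RInt_gen_pc_integral p x : -1 < p ->
  is_RInt_gen (pc_integrand p x) (at_right 0) (Rbar_locally p_infty) (pc_integral p x).
Proof.
  intros Hp. apply (RInt_gen_correct (V := R_CompleteNormedModule)).
  now apply ex_RInt_gen_pc_integrand.
Qed.

Lemma pc_integral_pos p x : -1 < p -> 0 < pc_integral p x.
Proof.
  intros Hp. apply (is_RInt_gen_gt_0 (pc_integrand p x)); [|now apply is_RInt_gen_pc_integral].
  intros t Ht. split; [now apply continuous_pc_integrand | apply pc_integrand_pos].
Qed.

(* Pointwise the remainder is [t^p e^(-t^2/2 - x t) (e^u - 1 - u)] with [u = -h t],
   and [|e^u - 1 - u| <= u^2 e^|u| <= h^2 t^2 e^t] for [|h| <= 1]. *)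
Lemma pc_integral_remainder p x h : -1 < p -> Rabs h <= 1 ->
  Rabs (pc_integral p (x + h) - pc_integral p x - h * - pc_integral (p + 1) x)
    <= pc_integral (p + 2) (x - 1) * h ^ 2.
Proof.
  intros Hp Hh.
  set (F0 := at_right 0). set (Finf := Rbar_locally p_infty).
  assert (Hdiff := is_RInt_gen_plus (Fa := F0) (Fb := Finf) _ _ _ _
    (is_RInt_gen_minus (Fa := F0) (Fb := Finf) _ _ _ _
      (is_RInt_gen_pc_integral p (x + h) Hp) (is_RInt_gen_pc_integral p x Hp))
    (is_RInt_gen_scal (Fa := F0) (Fb := Finf) _ h _
      (is_RInt_gen_pc_integral (p + 1) x ltac:(lra)))).
  assert (Hbound := is_RInt_gen_scal (Fa := F0) (Fb := Finf) _ (h ^ 2) _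
    (is_RInt_gen_pc_integral (p + 2) (x - 1) ltac:(lra))).
  replace (pc_integral p (x + h) - pc_integral p x - h * - pc_integral (p + 1) x)
    with (pc_integral p (x + h) + - pc_integral p x + h * pc_integral (p + 1) x) by ring.
  rewrite (Rmult_comm (pc_integral (p + 2) (x - 1))).
  refine (RInt_gen_norm _ _ _ _ _ _ Hdiff Hbound);
    (eapply filter_imp; [|apply (filter_prod_0_p_infty 1 1); lra]);
    intros [a b] Hab; simpl in *; [lra|].
  intros t Ht. assert (Ht0 : 0 < t) by lra.
  change (Rabs (pc_integrand p (x + h) t + - pc_integrand p x t + h * pc_integrand (p + 1) x t)
    <= h ^ 2 * pc_integrand (p + 2) (x - 1) t).
  replace (p + 2) with (p + 1 + 1) by ring.
  replace (x - 1) with (x + -1) by ring.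
  rewrite !pc_integrand_succ, pc_integrand_shift, pc_integrand_shift by lra.
  assert (Hpos := pc_integrand_pos p x t).
  replace (pc_integrand p x t * exp (- h * t) + - pc_integrand p x t + h * (pc_integrand p x t * t))
    with (pc_integrand p x t * (exp (- h * t) - 1 - (- h * t))) by ring.
  rewrite Rabs_mult, Rabs_right by lra.
  replace (h ^ 2 * (pc_integrand p x t * exp (- -1 * t) * t * t))
    with (pc_integrand p x t * ((- h * t) ^ 2 * exp t))
    by (replace (- -1 * t) with t by ring; ring).
  apply Rmult_le_compat_l; [lra|].
  eapply Rle_trans; [apply abs_exp_sub_1_sub_le|].
  apply Rmult_le_compat_l; [apply pow2_ge_0|]. apply exp_le_compat.
  rewrite Rabs_mult, Rabs_Ropp, (Rabs_right t) by lra. nra.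
Qed.

Lemma is_derive_pc_integral p x : -1 < p ->
  is_derive (pc_integral p) x (- pc_integral (p + 1) x).
Proof.
  intros Hp. apply (is_derive_quadratic_remainder _ _ _ (pc_integral (p + 2) (x - 1))).
  intros h Hh. now apply pc_integral_remainder.
Qed.

Lemma pc_integral_decreasing p x y : -1 < p -> x < y -> pc_integral p y < pc_integral p x.
Proof.
  intros Hp Hxy. apply Ropp_lt_cancel.
  apply (incr_function (fun z => - pc_integral p z) m_infty p_infty (pc_integral (p + 1)));
    try easy.
  - intros z _ _. rewrite <- (Ropp_involutive (pc_integral (p + 1) z)).
    apply (is_derive_opp (pc_integral p)). now apply is_derive_pc_integral.
  - intros z _ _. apply pc_integral_pos. lra.
Qed.

Lemma Gamma_pos s : 0 < s -> 0 < Gamma s.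
Proof.
  intros Hs. set (g := fun t => Rpower t (s - 1) * exp (- t)).
  assert (Hg : forall t, 0 < t -> continuous g t /\ 0 < g t).
  { intros t Ht. split.
    - apply (ex_derive_continuous (V := R_NormedModule)). unfold g, Rpower. auto_derive. exact Ht.
    - apply Rmult_lt_0_compat; apply exp_pos. }
  apply (is_RInt_gen_gt_0 g); [exact Hg|].
  apply (RInt_gen_correct (V := R_CompleteNormedModule)).
  apply (ex_RInt_gen_Rpower_bounds g (s - 1) 1 (exp ((s + 1) ^ 2)));
    [lra | intros; apply Hg; lra | |];
    intros t Ht; rewrite Rabs_right by (apply Rle_ge, Rlt_le, Hg; lra);
    unfold g, Rpower; rewrite <- !exp_plus.
  - rewrite Rmult_1_l. apply exp_le_compat. lra.
  - apply exp_le_compat. assert (Hln := mul_ln_le (s + 1) t Ht). lra.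
Qed.

Lemma psi_eq mu kappa sigma rho x : 0 < kappa -> 0 < sigma ->
  psi mu kappa sigma rho x
    = / Gamma (rho / kappa) * pc_integral (rho / kappa - 1) (sqrt (2 * kappa) / sigma * (mu - x)).
Proof.
  intros Hk Hs. unfold psi. rewrite Dpc_pc_integral.
  replace (- (- rho / kappa)) with (rho / kappa) by (field; lra).
  replace (- ((x - mu) / sigma) * sqrt (2 * kappa)) with (sqrt (2 * kappa) / sigma * (mu - x))
    by (field; lra).
  replace (- (sqrt (2 * kappa) / sigma * (mu - x)) ^ 2 / 4)
    with (- (kappa * (x - mu) ^ 2 / (2 * sigma ^ 2))).
  - rewrite exp_Ropp. unfold Rdiv at 2.
    rewrite <- !Rmult_assoc, Rinv_r, Rmult_1_l by apply Rgt_not_eq, exp_pos. reflexivity.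
  - replace ((sqrt (2 * kappa) / sigma * (mu - x)) ^ 2)
      with (sqrt (2 * kappa) ^ 2 * ((mu - x) / sigma) ^ 2) by (field; lra).
    rewrite pow2_sqrt by lra. field. lra.
Qed.

Lemma is_derive_psi mu kappa sigma rho x : 0 < kappa -> 0 < sigma -> 0 < rho ->
  is_derive (psi mu kappa sigma rho) x
    (sqrt (2 * kappa) / sigma / Gamma (rho / kappa)
       * pc_integral (rho / kappa) (sqrt (2 * kappa) / sigma * (mu - x))).
Proof.
  intros Hk Hs Hr. set (a := sqrt (2 * kappa) / sigma).
  assert (Hnu : 0 < rho / kappa) by now apply Rdiv_lt_0_compat.
  apply (is_derive_ext
    (fun y => / Gamma (rho / kappa) * pc_integral (rho / kappa - 1) (a * (mu - y)))).
  { intros y. symmetry. now apply psi_eq. }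
  replace (a / Gamma (rho / kappa) * pc_integral (rho / kappa) (a * (mu - x)))
    with (/ Gamma (rho / kappa) * ((- a) * - pc_integral (rho / kappa - 1 + 1) (a * (mu - x))))
    by (replace (rho / kappa - 1 + 1) with (rho / kappa) by ring; unfold Rdiv; ring).
  apply is_derive_scal.
  apply (is_derive_comp (pc_integral (rho / kappa - 1)) (fun y => a * (mu - y))).
  - apply is_derive_pc_integral. lra.
  - auto_derive; [exact I | ring].
Qed.

Definition H_reduced (q z0 z : R) : R := pc_integral q z + (z - z0) * pc_integral (q + 1) z.

Lemma H_reduced_pos q z0 z : -1 < q -> z0 <= z -> 0 < H_reduced q z0 z.
Proof.
  intros Hq Hz. unfold H_reduced.
  assert (H0 := pc_integral_pos q z Hq).
  assert (H1 := pc_integral_pos (q + 1) z ltac:(lra)).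
  nra.
Qed.

Lemma is_derive_H_reduced q z0 z : -1 < q ->
  is_derive (H_reduced q z0) z ((z0 - z) * pc_integral (q + 2) z).
Proof.
  intros Hq.
  assert (Hmul := is_derive_mult (fun y => y - z0) (pc_integral (q + 1)) z 1 _
    ltac:(auto_derive; trivial) (is_derive_pc_integral (q + 1) z ltac:(lra)) Rmult_comm).
  assert (Hsum := is_derive_plus _ _ z _ _ (is_derive_pc_integral q z Hq) Hmul).
  replace (q + 1 + 1) with (q + 2) in Hsum by ring.
  replace ((z0 - z) * pc_integral (q + 2) z)
    with (- pc_integral (q + 1) z
          + (1 * pc_integral (q + 1) z + (z - z0) * - pc_integral (q + 2) z))
    by ring.
  exact Hsum.
Qed.

Lemma H_reduced_increasing q z0 y z : -1 < q -> y < z < z0 ->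
  H_reduced q z0 y < H_reduced q z0 z.
Proof.
  intros Hq Hyz.
  apply (incr_function (H_reduced q z0) m_infty z0 (fun w => (z0 - w) * pc_integral (q + 2) w));
    simpl; try tauto.
  - intros w _ _. now apply is_derive_H_reduced.
  - intros w _ Hw. apply Rmult_lt_0_compat; [lra | apply pc_integral_pos; lra].
Qed.

(* Below [w = z0 - 1] the slope is at least [pc_integral (q + 2) w > 0]. *)
Lemma H_reduced_neg q z0 : -1 < q -> exists z, H_reduced q z0 z < 0.
Proof.
  intros Hq. set (w := z0 - 1). set (m := pc_integral (q + 2) w).
  assert (Hm : 0 < m) by (apply pc_integral_pos; lra).
  set (z := w - (Rabs (H_reduced q z0 w) + 1) / m).
  assert (Hzw : z < w).
  { unfold z. assert (0 < (Rabs (H_reduced q z0 w) + 1) / m)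
      by (apply Rdiv_lt_0_compat; [pose proof (Rabs_pos (H_reduced q z0 w)) |]; lra). lra. }
  exists z.
  destruct (MVT_gen (H_reduced q z0) z w (fun u => (z0 - u) * pc_integral (q + 2) u))
    as [c [Hc Hmvt]].
  - intros u _. now apply is_derive_H_reduced.
  - intros u _. apply continuity_pt_filterlim, (ex_derive_continuous (V := R_NormedModule)).
    eexists. now apply is_derive_H_reduced.
  - rewrite Rmin_left, Rmax_right in Hc by lra.
    assert (Hslope : m <= (z0 - c) * pc_integral (q + 2) c).
    { assert (Hmc : m <= pc_integral (q + 2) c).
      { destruct (Req_dec c w) as [-> | Hcw]; [apply Rle_refl|].
        apply Rlt_le, pc_integral_decreasing; lra. }
      assert (0 <= (z0 - c - 1) * pc_integral (q + 2) c)
        by (apply Rmult_le_pos; unfold w in Hc; lra).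
      lra. }
    assert (Hgap : (w - z) * m = Rabs (H_reduced q z0 w) + 1) by (unfold z; field; lra).
    assert (Hle := Rle_abs (H_reduced q z0 w)).
    nra.
Qed.

Lemma unique_root_of_increasing (f : R -> R) z0 : continuity f ->
  (forall z, z0 <= z -> 0 < f z) -> (forall y z, y < z < z0 -> f y < f z) ->
  (exists z, f z < 0) -> exists! z, f z = 0.
Proof.
  intros Hcont Hpos Hincr [z1 Hz1].
  assert (Hz1z0 : z1 < z0)
    by (destruct (Rlt_le_dec z1 z0) as [|Hle]; [|specialize (Hpos _ Hle)]; lra).
  destruct (IVT f z1 z0 Hcont Hz1z0 Hz1 (Hpos z0 (Rle_refl _))) as [w [Hw Hfw]].
  assert (Hbelow : forall y, f y = 0 -> y < z0)
    by (intros y Hy; destruct (Rlt_le_dec y z0) as [|Hle]; [|specialize (Hpos _ Hle)]; lra).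
  exists w. split; [exact Hfw|]. intros y Hy.
  assert (Hw0 := Hbelow w Hfw). assert (Hy0 := Hbelow y Hy).
  destruct (Rtotal_order w y) as [Hlt | [Heq | Hgt]]; [| exact Heq |].
  - specialize (Hincr w y (conj Hlt Hy0)). lra.
  - specialize (Hincr y w (conj Hgt Hw0)). lra.
Qed.

Lemma H_reduced_unique_root q z0 : -1 < q -> exists! z, H_reduced q z0 z = 0.
Proof.
  intros Hq. apply (unique_root_of_increasing _ z0).
  - intros z. apply continuity_pt_filterlim, (ex_derive_continuous (V := R_NormedModule)).
    eexists. now apply is_derive_H_reduced.
  - intros z. now apply H_reduced_pos.
  - intros y z. now apply H_reduced_increasing.
  - now apply H_reduced_neg.
Qed.

Lemma unique_root_affine (F G : R -> R) k a b : k <> 0 -> a <> 0 ->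
  (forall x, F x = k * G (a * (b - x))) -> (exists! z, G z = 0) -> exists! x, F x = 0.
Proof.
  intros Hk Ha HFG [z [Hz Huniq]].
  exists (b - z / a). split.
  - rewrite HFG. replace (a * (b - (b - z / a))) with z by (field; exact Ha). rewrite Hz. ring.
  - intros x Hx. rewrite HFG in Hx.
    destruct (Rmult_integral _ _ Hx) as [H0 | H0]; [contradiction|].
    rewrite (Huniq _ H0). field. exact Ha.
Qed.

Theorem lemma4p2 (mu kappa sigma rho beta c ybar : R)
  (Hkappa : 0 < kappa) (Hsigma : 0 < sigma) (Hrho : 0 < rho)
  (Hbeta : 0 < beta) (Hc : 0 <= c) (Hybar : 0 < ybar) :
  exists! xt : R, Hfun mu kappa sigma rho beta c ybar xt = 0.
Proof.
  set (a := sqrt (2 * kappa) / sigma).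
  assert (Ha : 0 < a) by (apply Rdiv_lt_0_compat; [apply sqrt_lt_R0; lra | exact Hsigma]).
  assert (Hnu : 0 < rho / kappa) by now apply Rdiv_lt_0_compat.
  assert (HG := Gamma_pos _ Hnu).
  (* [x0] solves [Rtilde x0 ybar = c]. *)
  set (x0 := (c * rho * (rho + kappa) - mu * kappa + beta * (rho + 2 * kappa) * ybar) / rho).
  apply (unique_root_affine _ (H_reduced (rho / kappa - 1) (a * (mu - x0)))
           (/ Gamma (rho / kappa) / (rho + kappa)) a mu).
  - apply Rgt_not_eq. unfold Rdiv. apply Rmult_lt_0_compat; apply Rinv_0_lt_compat; lra.
  - lra.
  - intros x. unfold Hfun.
    rewrite (is_derive_unique _ _ _ (is_derive_psi mu kappa sigma rho x Hkappa Hsigma Hrho)),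
      psi_eq by assumption.
    unfold H_reduced, Rtilde. fold a.
    replace (rho / kappa - 1 + 1) with (rho / kappa) by ring.
    unfold x0. field. repeat split; lra.
  - apply H_reduced_unique_root. lra.
Qed.
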